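(* Let $G$ be a connected Lie group with identity $e$ and consider a discrete-time linear control system on $G$ with control range $U\subset\mathbb{R}^m$ a compact neighborhood of $0$. Let $H$ be a connected Lie subgroup of $G$ and suppose there is a neighborhood $B$ of $e$ in $H$ with $B\subset H\cap\mathcal{R}$ which is invariant under $f_0$ and $f_0^{-1}$. Then $H$ is $f_0$-invariant and $H\subset\mathcal{R}$.
   Context: A discrete-time linear control system on $G$ is given by $f:G\times U\to G$, $f_u:=f(\cdot,u)$, such that $f_0$ is an automorphism of $G$ and $f_u(g)=f_u(e)f_0(g)$ for all $g\in G,u\in U$. Solutions: $\varphi(0,g,u)=g$, $\varphi(k,g,u)=f_{u_{k-1}}\circ\cdots\circ f_{u_0}(g)$ for $u=(u_i)\in U^{\mathbb{N}_0}$; $\mathcal{R}=\bigcup_{k\in\mathbb{N}}\{\varphi(k,e,u)\}$. A set $S$ is invariant under a map $\psi$ if $\psi(S)\subset S$. *)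

From HB Require Import structures.
From mathcomp Require Import all_boot all_order all_algebra.
From mathcomp Require Import all_classical all_reals all_analysis.
Set Implicit Arguments. Unset Strict Implicit. Unset Printing Implicit Defensive.
Import Order.TTheory GRing.Theory Num.Theory.
Local Open Scope classical_set_scope.

Definition is_group (G : Type) (mul : G -> G -> G) (inv : G -> G) (e : G) : Prop :=
  [/\ forall x y z, mul x (mul y z) = mul (mul x y) z,
      forall x, mul e x = x,
      forall x, mul x e = x,
      forall x, mul (inv x) x = e &
      forall x, mul x (inv x) = e].

(* Hausdorff topological group (stand-in for "Lie group"). *)
Definition is_topgroup (G : topologicalType) (mul : G -> G -> G) (inv : G -> G)
  (e : G) : Prop :=
  [/\ is_group mul inv e,
      continuous (fun p : G * G => mul p.1 p.2),
      continuous inv &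
      hausdorff_space G].

Definition is_hom (G H : Type) (mulG : G -> G -> G) (mulH : H -> H -> H)
  (phi : G -> H) : Prop := forall x y, phi (mulG x y) = mulH (phi x) (phi y).

Definition is_top_automorphism (G : topologicalType) (mul : G -> G -> G)
  (phi : G -> G) : Prop :=
  is_hom mul mul phi /\ continuous phi /\
  exists psi : G -> G, cancel phi psi /\ cancel psi phi /\ continuous psi.

Definition linear_control_system (G : topologicalType) (mul : G -> G -> G)
  (e : G) (C : Type) (U : set C) (zero : C) (f : G -> C -> G) : Prop :=
  is_top_automorphism mul (fun g => f g zero) /\
  forall u g, U u -> f g u = mul (f e u) (f g zero).

Fixpoint sol (G C : Type) (f : G -> C -> G) (k : nat) (g : G) (u : nat -> C)
  : G :=
  match k with
  | 0 => g
  | k'.+1 => f (sol f k' g u) (u k')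
  end.

Definition reachable (G C : Type) (U : set C) (f : G -> C -> G) (e : G) : set G :=
  [set x | exists k : nat, exists u : nat -> C,
      (0 < k)%N /\ (forall i, U (u i)) /\ x = sol f k e u].

From mathcomp Require Import all_boot all_order all_algebra.
From mathcomp Require Import all_classical all_reals all_analysis.
Import numFieldNormedType.Exports.
Local Open Scope classical_set_scope.

(* Since H is connected, the neighbourhood B of the identity generates H as a
   semigroup: the set of finite products b_1 ... b_n of elements of B is open
   and closed.  Both conclusions are stable under right multiplication by B:
   f_0 is a homomorphism mapping iota(B) into itself, and if x is reached in
   k steps and y lies in iota(B), then y = f_0^k(y') with y' = f_0^-k(y) in
   iota(B), which is reachable, so by linearity x y = x f_0^k(y') is reachable. *)

Inductive gen_semigroup {T : Type} (mul : T -> T -> T) (B : set T) : set T :=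
| gen_semigroup_base b of B b : gen_semigroup mul B b
| gen_semigroup_mul s b of gen_semigroup mul B s & B b :
    gen_semigroup mul B (mul s b).

Section ConnectedTopologicalGroup.
Context {H : topologicalType} {mul : H -> H -> H} {inv : H -> H} {e : H}.
Hypothesis H_group : is_group mul inv e.
Hypothesis mul_cont : continuous (fun p : H * H => mul p.1 p.2).
Hypothesis inv_cont : continuous inv.

Lemma continuous_mul_fun (a b : H -> H) :
  continuous a -> continuous b -> continuous (fun y => mul (a y) (b y)).
Proof.
move=> ca cb y.
by apply: continuous2_cvg; [exact: (mul_cont (a y, b y))|exact: ca|exact: cb].
Qed.

Lemma mulKV_group s y : mul s (mul (inv s) y) = y.
Proof. by case: H_group => mulA mul1g _ _ mulgV; rewrite mulA mulgV mul1g. Qed.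

Lemma nbhs_preimage_mulV {B : set H} {a b : H -> H} {x : H} :
  continuous a -> continuous b -> mul (inv (a x)) (b x) = e -> nbhs e B ->
  nbhs x [set y | B (mul (inv (a y)) (b y))].
Proof.
move=> ca cb axbx Be.
have cab : continuous (fun y => mul (inv (a y)) (b y)).
  by apply: continuous_mul_fun => // y; exact: (continuous_comp (ca y) (inv_cont (a y))).
by apply: cab; rewrite axbx.
Qed.

Lemma gen_semigroup_nbhs1 {B : set H} :
  connected [set: H] -> nbhs e B -> gen_semigroup mul B = setT.
Proof.
move=> Hconn Be.
have id_cont : continuous (@id H) by move=> ?; exact: cvg_id.
have mulVg y : mul (inv y) y = e by case: H_group.
apply: Hconn; first by exists e; exact: gen_semigroup_base (nbhs_singleton Be).
- exists (gen_semigroup mul B); last by rewrite setTI.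
  rewrite openE => s Gs.
  have := nbhs_preimage_mulV (@cst_continuous _ _ s) id_cont (mulVg s) Be.
  by apply: filterS => y /= By; rewrite -(mulKV_group s y); exact: gen_semigroup_mul.
- exists (closure (gen_semigroup mul B)); first exact: closed_closure.
  rewrite setTI; apply/seteqP; split=> [|x Cx]; first exact: subset_closure.
  have [s [Gs /= Bs]] := Cx _ (nbhs_preimage_mulV id_cont (@cst_continuous _ _ x) (mulVg x) Be).
  by rewrite -(mulKV_group s x); exact: gen_semigroup_mul.
Qed.

End ConnectedTopologicalGroup.

Lemma hom_gen_semigroup_range (H G : Type) (mulH : H -> H -> H)
    (mul : G -> G -> G) (iota : H -> G) (phi : G -> G) (B : set H) :
  is_hom mulH mul iota -> is_hom mul mul phi ->
  phi @` (iota @` B) `<=` iota @` B ->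
  forall x, gen_semigroup mulH B x -> range iota (phi (iota x)).
Proof.
move=> iota_hom phi_hom phiB x.
have phi_iotaB b : B b -> exists2 b', B b' & iota b' = phi (iota b).
  by move=> Bb; apply: phiB; exists (iota b) => //; exists b.
elim=> {x} [b /phi_iotaB[b' _ <-]|s b _ [s' _ iota_s'] /phi_iotaB[b' _ phi_b]].
  by exists b'.
by exists (mulH s' b') => //; rewrite !iota_hom phi_hom iota_s' phi_b.
Qed.

Lemma preimage_invariant_iter {T : Type} {h psi : T -> T} {K : set T} :
  cancel psi h -> h @^-1` K `<=` K ->
  forall k y, K y -> exists2 x, K x & iter k h x = y.
Proof.
move=> psiK hK; elim=> [|k IH] y Ky; first by exists y.
have [x Kx <-] := IH y Ky; exists (psi x); last by rewrite iterSr psiK.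
by apply: hK; rewrite /preimage /= psiK.
Qed.

Section LinearControlSystem.
Context {G C : Type} {mul : G -> G -> G} {inv : G -> G} {e : G}.
Context {U : set C} {zero : C} {f : G -> C -> G}.
Hypothesis G_group : is_group mul inv e.
Hypothesis f0_hom : is_hom mul mul (fun g => f g zero).
Hypothesis f_linear : forall u g, U u -> f g u = mul (f e u) (f g zero).

Local Notation f0 := (fun g => f g zero).

Definition reachable_in (k : nat) : set G :=
  [set x | exists2 u : nat -> C, (forall i, U (u i)) & x = sol f k e u].

Lemma reachableP x :
  reachable U f e x <-> exists2 k, (0 < k)%N & reachable_in k x.
Proof.
split=> [[k [u [k0 [Uu ->]]]]|[k k0 [u Uu ->]]]; first by exists k => //; exists u.
by exists k, u.
Qed.

Lemma eq_sol k g u v :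
  (forall i, (i < k)%N -> u i = v i) -> sol f k g u = sol f k g v.
Proof. by elim: k => [//|k IH] uv /=; rewrite IH ?uv // => i /ltnW/uv. Qed.

Lemma solD k l g u : sol f (k + l) g u = sol f k (sol f l g u) (fun i => u (i + l)).
Proof. by elim: k => [//|k IH]; rewrite addSn /= IH. Qed.

Lemma sol_mul_iter k g u : (forall i, U (u i)) ->
  sol f k g u = mul (sol f k e u) (iter k f0 g).
Proof.
case: G_group => mulA mul1g _ _ _ Uu.
elim: k g => [|k IH] g /=; first by rewrite mul1g.
by rewrite f_linear // IH f0_hom mulA -f_linear.
Qed.

Lemma reachable_in_mul k l x y : reachable_in k x -> reachable_in l y ->
  reachable_in (k + l) (mul x (iter k f0 y)).
Proof.
move=> [u Uu ->] [v Uv ->].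
pose w i := if (i < l)%N then v i else u (i - l).
have Uw i : U (w i) by rewrite /w; case: ifP.
exists w => //; rewrite solD (sol_mul_iter k (sol f l e w)) //.
congr (mul _ (iter k _ _)); apply: eq_sol => i; rewrite /w.
  by move=> _; rewrite ltnNge leq_addl addnK.
by move=> ->.
Qed.

Lemma reachable_mul_invariant {psi : G -> G} {K : set G} :
  cancel psi f0 -> K `<=` reachable U f e -> f0 @^-1` K `<=` K ->
  forall x y, reachable U f e x -> K y -> reachable U f e (mul x y).
Proof.
move=> psiK KR f0K x y /reachableP[k k0 Rx] Ky.
have [y' Ky' <-] := preimage_invariant_iter psiK f0K k y Ky.
have /reachableP[l _ Ry'] := KR y' Ky'.
by apply/reachableP; exists (k + l)%N; [rewrite addn_gt0 k0|exact: reachable_in_mul].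
Qed.

End LinearControlSystem.

Theorem corollary2p17
  (R : realType) (m : nat)
  (G : topologicalType) (mul : G -> G -> G) (inv : G -> G) (e : G)
  (HG : is_topgroup mul inv e) (Gconn : connected [set: G])
  (U : set 'rV[R]_m) (Ucpt : compact U) (Unbhs : nbhs (0%R : 'rV[R]_m) U)
  (f : G -> 'rV[R]_m -> G)
  (Hsys : linear_control_system mul e U 0%R f)
  (H : topologicalType) (mulH : H -> H -> H) (invH : H -> H) (eH : H)
  (HH : is_topgroup mulH invH eH) (Hconn : connected [set: H])
  (iota : H -> G) (iota_inj : injective iota) (iota_hom : is_hom mulH mul iota)
  (iota_cont : continuous iota)
  (B : set H) (B_nbhs : nbhs eH B)
  (B_R : iota @` B `<=` reachable U f e)
  (B_f0 : (fun g => f g 0%R) @` (iota @` B) `<=` iota @` B)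
  (B_f0inv : (fun g => f g 0%R) @^-1` (iota @` B) `<=` iota @` B) :
  (fun g => f g 0%R) @` (range iota) `<=` range iota /\
  range iota `<=` reachable U f e.
Proof.
have [[f0_hom [_ [psi [_ [psiK _]]]]] f_linear] := Hsys.
have [G_group _ _ _] := HG.
have [H_group mulH_cont invH_cont _] := HH.
have genB x : gen_semigroup mulH B x.
  by rewrite (gen_semigroup_nbhs1 H_group mulH_cont invH_cont Hconn B_nbhs).
split=> [_ [_ [x _ <-] <-]|_ [x _ <-]].
  exact: hom_gen_semigroup_range iota_hom f0_hom B_f0 x (genB x).
elim: (genB x) => {x} [b Bb|s b _ Rs Bb]; first by apply: B_R; exists b.
have iota_b : (iota @` B) (iota b) by exists b.
have := reachable_mul_invariant G_group f0_hom f_linear psiK B_R B_f0inv _ _ Rs iota_b.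
by rewrite iota_hom.
Qed.
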